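(* Let $n$ be a positive odd integer. Then, modulo $\Phi_n(q)$, \[ \sum_{k=0}^{n-1}\frac{(q;q^4)_k^2}{(q^4;q^4)_k^2}(-q)^{k} \equiv\begin{cases} \dfrac{(q,q^2,-q^3,-q^4;q^4)_{(n-1)/8}}{(q^4;q^4)_{(n-1)/4}}\,q^{(1-n^2)/8} &\text{if } n\equiv 1\pmod 8,\\[8pt] \dfrac{(q,q^2,-q^3,-q^4;q^4)_{(3n-1)/8}}{(q^4;q^4)_{(3n-1)/4}}\,q^{(1-n^2)/8} &\text{if } n\equiv 3\pmod 8,\\[8pt] -\dfrac{(1-q^2)(-q^3,-q^4,q^5,q^6;q^4)_{(n-5)/8}}{(q^4;q^4)_{(n-5)/4}}\,q^{(9-n^2)/8} &\text{if } n\equiv 5\pmod 8,\\[8pt] -\dfrac{(1-q^2)(-q^3,-q^4,q^5,q^6;q^4)_{(3n-5)/8}}{(q^4;q^4)_{(3n-5)/4}}\,q^{(9-n^2)/8} &\text{if } n\equiv 7\pmod 8. \end{cases} \]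
   Context: For an indeterminate $a$ and a nonnegative integer $k$, $(a;q)_k=\prod_{j=0}^{k-1}(1-aq^j)$, with $(a;q)_0=1$, and $(a_1,\dots,a_m;q)_k=(a_1;q)_k\cdots(a_m;q)_k$. $\Phi_n(q)=\prod_{1\le j\le n,\ \gcd(j,n)=1}(q-e^{2\pi i j/n})$ is the $n$-th cyclotomic polynomial. A congruence between rational functions in $q$ (possibly involving negative powers of $q$) modulo a polynomial $P(q)$ means that the difference, written as a ratio of polynomials with denominator coprime to $P(q)$, has numerator divisible by $P(q)$. *)

From HB Require Import structures.
From mathcomp Require Import all_boot all_order all_algebra.
From mathcomp Require Import fraction cyclotomic.
Set Implicit Arguments. Unset Strict Implicit. Unset Printing Implicit Defensive.
Import Order.TTheory GRing.Theory Num.Theory.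
Local Open Scope ring_scope.

Definition RF := {fraction {poly rat}}.

Definition toRF (p : {poly rat}) : RF := @FracField.tofrac _ p.

Definition qq : RF := toRF 'X.

Definition qpoch (a p : RF) (k : nat) : RF := \prod_(j < k) (1 - a * p ^+ j).

Definition Phi (n : nat) : {poly rat} := map_poly (intr : int -> rat) 'Phi_n.

Definition qcong (x y : RF) (P : {poly rat}) : Prop :=
  exists N M : {poly rat}, [/\ coprimep M P, P %| N & x - y = toRF N / toRF M].

From HB Require Import structures.
From mathcomp Require Import all_boot all_order all_algebra.
From mathcomp Require Import fraction cyclotomic.
From mathcomp Require Import algC.
From mathcomp Require Import ring zify.
Import Order.TTheory GRing.Theory Num.Theory.
Local Open Scope ring_scope.

(* At a primitive n-th root of unity z both sides are regular, and since Phi_n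
   is the minimal polynomial of z over Q, two such rational functions are
   congruent modulo Phi_n as soon as their values at z agree.

   Put p = z^4 and choose m with 4m + 1 in {n, 3n}, so that z p^m = 1 and
   (z;p)_k = 0 for k > m.  By the q-binomial theorem (z;p)_k/(p;p)_k and
   (-z)^k (z;p)_k/(p;p)_k are the coefficients of x^k in (zx;p)_m and
   (-z^2 x;p)_m.  Reversing the second polynomial, which z^(4m+1) = 1 turns
   into z^(2m^2) (-z^3 x;p)_m, makes the truncated sum z^(2m^2) times the
   coefficient of x^m in (zx;p)_m (-z^3 x;p)_m = (zx;-z^2)_(2m).  The
   q-binomial theorem evaluates this middle coefficient as
   (z;-z^2)_m / (-z^2;-z^2)_m, and splitting both products into their even and
   odd factors gives the stated closed forms; m is even exactly when
   n = 1, 3 (mod 8). *)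

Lemma big_ord_double {T : Type} {idx : T} (op : Monoid.law idx) (F : nat -> T) m :
  \big[op/idx]_(t < 2 * m) F t = \big[op/idx]_(j < m) op (F (2 * j)%N) (F (2 * j).+1).
Proof.
elim: m => [|m IHm]; first by rewrite muln0 !big_ord0.
by rewrite (_ : 2 * m.+1 = (2 * m).+2)%N ?mulnS // !big_ord_recr IHm /= Monoid.mulmA.
Qed.

Lemma sum_ord_4j_add2 m : (\sum_(j < m) (4 * j + 2) = 2 * m * m)%N.
Proof. by elim: m => [|m IHm]; rewrite ?big_ord0 // big_ord_recr /= IHm; nia. Qed.

Section Pochhammer.
Context {R : comNzRingType}.

Definition poch (a b : R) k : R := \prod_(j < k) (1 - a * b ^+ j).

Lemma pochS a b k : poch a b k.+1 = poch a b k * (1 - a * b ^+ k).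
Proof. by rewrite /poch big_ord_recr. Qed.

Lemma pochSl a b k : poch a b k.+1 = (1 - a) * poch (a * b) b k.
Proof.
rewrite /poch big_ord_recl expr0 mulr1; congr (_ * _).
by apply: eq_bigr => j _; rewrite exprS mulrA.
Qed.

Lemma pochMN a b k : poch a b k * poch (- a) b k = poch (a ^+ 2) (b ^+ 2) k.
Proof.
rewrite /poch -big_split /=; apply: eq_bigr => j _.
by rewrite -exprM mulnC exprM; ring.
Qed.

Lemma poch_double a b k :
  poch a b (2 * k) = poch a (b ^+ 2) k * poch (a * b) (b ^+ 2) k.
Proof.
rewrite /poch (big_ord_double *%R (fun j => 1 - a * b ^+ j)) -big_split /=.
by apply: eq_bigr => j _; rewrite exprS exprM; ring.
Qed.

Lemma prod_expS_sub1 b k : \prod_(j < k) (b ^+ j.+1 - 1) = (-1) ^+ k * poch b b k.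
Proof.
rewrite /poch -[k in (-1) ^+ k]card_ord -prodr_const -big_split /=.
by apply: eq_bigr => j _; rewrite exprS; ring.
Qed.

Lemma prod_sub_inv {a d : R} b k : a * d = 1 ->
  a ^+ k * \prod_(j < k) (b ^+ j - d) = (-1) ^+ k * poch a b k.
Proof.
move=> ad1; rewrite /poch -[k in a ^+ k]card_ord -[k in (-1) ^+ k]card_ord.
rewrite -!prodr_const -!big_split /=; apply: eq_bigr => j _.
by rewrite mulrBr ad1; ring.
Qed.

Lemma poch_double_sqrt {a b} r : a ^+ 2 = b ->
  poch a b r * poch (- a) b r * (poch b b r * poch (- b) b r) = poch b b (2 * r).
Proof. by move=> <-; rewrite !pochMN poch_double -expr2. Qed.

Lemma poch_double_sqrtS {a b} r : a ^+ 2 = b ->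
  poch a b r.+1 * poch (- a) b r.+1 * (poch b b r * poch (- b) b r)
  = poch b b (2 * r) * (1 - b ^+ (2 * r).+1).
Proof.
move=> a2b; rewrite !pochS -(poch_double_sqrt r a2b) exprS (mulnC 2 r) exprM -a2b.
by ring.
Qed.

Definition poch_poly (a b : R) N : {poly R} := \prod_(j < N) (1 - (a * b ^+ j)%:P * 'X).

Lemma coefM_1subCX (P : {poly R}) c i :
  (P * (1 - c%:P * 'X))`_i = P`_i - (if i is i'.+1 then c * P`_i' else 0).
Proof.
rewrite mulrBr mulr1 coefB mulrCA coefCM coefMX.
by case: i => [|i] /=; rewrite ?mulr0.
Qed.

Lemma coef0_poch_poly a b N : (poch_poly a b N)`_0 = 1.
Proof.
elim: N => [|N IHN]; first by rewrite /poch_poly big_ord0 coef1.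
by rewrite /poch_poly big_ord_recr coefM_1subCX IHN subr0.
Qed.

Lemma coef_poch_poly_rec a b N k :
  (poch_poly a b N)`_k.+1 * (b ^+ k.+1 - 1) = a * (poch_poly a b N)`_k * (b ^+ k - b ^+ N).
Proof.
elim: N k => [k|N IHN k].
  by rewrite /poch_poly big_ord0 !coef1 expr0; case: k => [|k] /=; rewrite ?subrr; ring.
rewrite /poch_poly big_ord_recr -/(poch_poly a b N) /= !coefM_1subCX mulrBl.
case: k => [|k]; first by rewrite IHN coef0_poch_poly expr0 !exprS; ring.
rewrite IHN; apply/eqP; rewrite -subr_eq0; apply/eqP.
transitivity (a * b ^+ N.+1 * (a * (poch_poly a b N)`_k * (b ^+ k - b ^+ N)
                               - (poch_poly a b N)`_k.+1 * (b ^+ k.+1 - 1))).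
  by rewrite !exprS; ring.
by rewrite IHN subrr mulr0.
Qed.

(* The q-binomial theorem, with denominators cleared. *)
Lemma coef_poch_poly a b N k :
  (poch_poly a b N)`_k * \prod_(j < k) (b ^+ j.+1 - 1) = a ^+ k * \prod_(j < k) (b ^+ j - b ^+ N).
Proof.
elim: k => [|k IHk]; first by rewrite !big_ord0 coef0_poch_poly expr0 !mulr1.
rewrite !big_ord_recr /=; set P := \prod_(j < k) _ in IHk *.
transitivity ((poch_poly a b N)`_k.+1 * (b ^+ k.+1 - 1) * P); first by ring.
rewrite coef_poch_poly_rec.
transitivity (a * (b ^+ k - b ^+ N) * ((poch_poly a b N)`_k * P)); first by ring.
by rewrite IHk exprS; ring.
Qed.

Lemma poch_poly_double a b N :
  poch_poly a b (2 * N) = poch_poly a (b ^+ 2) N * poch_poly (a * b) (b ^+ 2) N.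
Proof.
rewrite /poch_poly (big_ord_double *%R (fun j => 1 - (a * b ^+ j)%:P * 'X)) -big_split /=.
by apply: eq_bigr => j _; rewrite exprS !exprM mulrA.
Qed.

Lemma coef_prod_1subCX_gt (u : nat -> R) N i : (N < i)%N ->
  (\prod_(j < N) (1 - (u j)%:P * 'X))`_i = 0.
Proof.
elim: N i => [|N IHN] [|i] //= lt_Ni; first by rewrite big_ord0 coef1.
by rewrite big_ord_recr coefM_1subCX /= !IHN ?(ltnW lt_Ni) // mulr0 subr0.
Qed.

Lemma coef_prod_XsubC_rev (u : nat -> R) {N k : nat} : (k <= N)%N ->
  (\prod_(j < N) ('X - (u j)%:P))`_k = (\prod_(j < N) (1 - (u j)%:P * 'X))`_(N - k).
Proof.
elim: N k => [|N IHN] k le_kN.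
  by move: le_kN; rewrite leqn0 => /eqP->; rewrite !big_ord0.
rewrite !big_ord_recr /= coefM_1subCX mulrBr coefB coefMX coefMC.
case: k le_kN => [|k] le_kN /=.
  by rewrite subn0 coef_prod_1subCX_gt // IHN // subn0 !sub0r mulrC.
rewrite subSS; have [lt_kN | ge_kN] := ltnP k N.
  by rewrite !IHN ?(ltnW lt_kN) // -(subnSK lt_kN) mulrC.
have -> : k = N by apply/eqP; rewrite eqn_leq ge_kN -ltnS le_kN.
have top_coef : (\prod_(j < N) ('X - (u j)%:P))`_N.+1 = 0.
  by rewrite nth_default // size_prod_XsubC /index_enum -enumT size_enum_ord.
by rewrite IHN // top_coef subnn mul0r !subr0.
Qed.

Lemma coef_poch_poly_inv {a b : R} {N : nat} c k : a * b ^+ N = 1 ->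
  (poch_poly (c * a) b N)`_k * poch b b k = c ^+ k * poch a b k.
Proof.
move=> abN1; apply: (can_inj (signrMK k)) => /=.
rewrite mulrCA -prod_expS_sub1 coef_poch_poly exprMn -mulrA (prod_sub_inv _ _ abN1).
by rewrite mulrCA.
Qed.

End Pochhammer.

Lemma poch_neq0 {R : idomainType} (b : R) k :
  (forall j, (0 < j <= k)%N -> b ^+ j != 1) -> poch b b k != 0.
Proof. by move=> bj; apply/prodf_neq0 => j _; rewrite -exprS subr_eq0 eq_sym bj //; exact: ltn_ord. Qed.

Section Summands.
Context {F : fieldType}.

Definition series_term (x : F) k :=
  poch x (x ^+ 4) k ^+ 2 / poch (x ^+ 4) (x ^+ 4) k ^+ 2 * (- x) ^+ k.

(* The right-hand sides for n = 1, 3 and for n = 5, 7 (mod 8); in the first case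
   m = (n - 1)/4 or (3n - 1)/4 is even, in the second it is odd. *)
Definition rhs_even (x : F) a b (e : int) :=
  poch x (x ^+ 4) a * poch (x ^+ 2) (x ^+ 4) a * poch (- x ^+ 3) (x ^+ 4) a
  * poch (- x ^+ 4) (x ^+ 4) a / poch (x ^+ 4) (x ^+ 4) b * x ^ e.

Definition rhs_odd (x : F) a b (e : int) :=
  - ((1 - x ^+ 2) * poch (- x ^+ 3) (x ^+ 4) a * poch (- x ^+ 4) (x ^+ 4) a
     * poch (x ^+ 5) (x ^+ 4) a * poch (x ^+ 6) (x ^+ 4) a
     / poch (x ^+ 4) (x ^+ 4) b) * x ^ e.

End Summands.

Section RootOfUnity.
Context {K : fieldType} {z : K} {m : nat}.
Hypothesis z_order : z ^+ (4 * m).+1 = 1.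
Hypothesis z4_neq1 : forall k, (0 < k <= m)%N -> z ^+ (4 * k) != 1.

Local Notation p := (z ^+ 4).

Lemma z_mul_pm : z * p ^+ m = 1.
Proof. by rewrite -exprM -exprS. Qed.

Lemma z_neq0 : z != 0.
Proof. by apply/eqP => z0; move: z_mul_pm; rewrite z0 mul0r => /esym/eqP; rewrite oner_eq0. Qed.

Lemma sqrr_z2 : (z ^+ 2) ^+ 2 = p.
Proof. by rewrite -exprM. Qed.

Lemma sqrr_Nz2 : (- z ^+ 2) ^+ 2 = p.
Proof. by rewrite sqrrN sqrr_z2. Qed.

Lemma poch_pp_neq0 {k} : (k <= m)%N -> poch p p k != 0.
Proof.
move=> le_km; apply: poch_neq0 => j /andP[j_gt0 le_jk].
by rewrite -exprM z4_neq1 // j_gt0 (leq_trans le_jk).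
Qed.

Lemma poch_z_eq0 {k} : (m < k)%N -> poch z p k = 0.
Proof. by move=> lt_mk; apply/eqP/prodf_eq0; exists (Ordinal lt_mk); rewrite //= z_mul_pm subrr. Qed.

Lemma coef_poch_poly_root c {k} : (k <= m)%N ->
  (poch_poly (c * z) p m)`_k = c ^+ k * (poch z p k / poch p p k).
Proof.
move=> le_km; rewrite mulrA -(coef_poch_poly_inv c k z_mul_pm) mulfK //.
exact: poch_pp_neq0.
Qed.

Lemma prod_XaddC_root :
  \prod_(j < m) ('X - (- z ^+ 2 * p ^+ j)%:P) = (z ^+ (2 * m * m))%:P * poch_poly (- z ^+ 3) p m.
Proof.
have factor j : (j < m)%N -> 'X - (- z ^+ 2 * p ^+ j)%:P =
    (z ^+ (4 * j + 2))%:P * (1 - (- z ^+ 3 * p ^+ (m - j.+1))%:P * 'X).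
  move=> lt_jm; have inv : z ^+ (4 * j + 2) * (z ^+ 3 * p ^+ (m - j.+1)) = 1.
    by rewrite -exprM -!exprD -z_order; congr (z ^+ _); lia.
  rewrite mulrBr mulr1 mulrA -polyCM !mulNr mulrN inv !polyCN polyC1 mulN1r !opprK addrC.
  by rewrite -exprM -exprD addnC.
rewrite /poch_poly [in RHS](reindex_inj rev_ord_inj) /=.
rewrite -sum_ord_4j_add2 -prodrXr rmorph_prod -big_split /=.
by apply: eq_bigr => j _; rewrite factor.
Qed.

Lemma sum_eq_middle_coef {n} : (m < n)%N ->
  \sum_(k < n) series_term z k = z ^+ (2 * m * m) * (poch_poly z (- z ^+ 2) (2 * m))`_m.
Proof.
move=> lt_mn; rewrite -(subnKC lt_mn) big_split_ord /= [X in _ + X]big1 ?addr0 => [|k _].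
  rewrite poch_poly_double sqrr_Nz2 mulrN -exprS coefM mulr_sumr.
  apply: eq_bigr => j _; have le_jm : (j <= m)%N := ltn_ord j.
  have := coef_prod_XsubC_rev (fun j => - z ^+ 2 * p ^+ j) (leq_subr j m).
  rewrite prod_XaddC_root coefCM subKn // -/(poch_poly (- z ^+ 2) p m).
  rewrite -[- z ^+ 2]mulNr coef_poch_poly_root // => rev.
  have := coef_poch_poly_root 1 le_jm; rewrite mul1r expr1n mul1r => ->.
  by rewrite mulrCA rev /series_term -expr_div_n; ring.
by rewrite /series_term poch_z_eq0 ?expr0n ?mul0r // ltn_addr.
Qed.

Lemma middle_coef :
  (poch_poly z (- z ^+ 2) (2 * m))`_m * poch (- z ^+ 2) (- z ^+ 2) m = poch z (- z ^+ 2) m.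
Proof.
have inv : z * (- z ^+ 2) ^+ (2 * m) = 1 by rewrite exprM sqrr_Nz2 z_mul_pm.
by have := coef_poch_poly_inv 1 m inv; rewrite expr1n !mul1r.
Qed.

Lemma middle_coef_even {r} : m = (2 * r)%N ->
  (poch_poly z (- z ^+ 2) (2 * m))`_m * (poch (- z ^+ 2) p r * poch p p r)
  = poch z p r * poch (- z ^+ 3) p r.
Proof.
move=> m2r; have := middle_coef; rewrite {3 4}m2r !poch_double.
by rewrite sqrr_Nz2 -expr2 sqrr_Nz2 mulrN -exprS.
Qed.

Lemma middle_coef_odd {r} : m = (2 * r).+1 ->
  (poch_poly z (- z ^+ 2) (2 * m))`_m * (poch (- z ^+ 2) p r.+1 * poch p p r)
  = poch z p r.+1 * poch (- z ^+ 3) p r.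
Proof.
move=> m2r; have := middle_coef; rewrite {3 4}m2r !pochS !poch_double.
rewrite sqrr_Nz2 -expr2 sqrr_Nz2 !exprM sqrr_Nz2 mulrN -exprS.
set c := _`_m => mid.
transitivity (c * (poch (- z ^+ 2) p r * poch p p r * (1 - - z ^+ 2 * p ^+ r))); first by ring.
by rewrite mid; ring.
Qed.

Lemma sum_root_even {n r} : m = (2 * r)%N -> (m < n)%N ->
  \sum_(k < n) series_term z k = rhs_even z r (2 * r) (2 * m * m)%:Z.
Proof.
move=> m2r lt_mn; rewrite (sum_eq_middle_coef lt_mn) /rhs_even -exprnP.
have := poch_pp_neq0 (leqnn m); rewrite {1}m2r -(poch_double_sqrt r sqrr_z2).
rewrite !mulf_eq0 !negb_or => /andP[/andP[nz_z2 nz_Nz2] /andP[nz_pp nz_Np]].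
have -> : (poch_poly z (- z ^+ 2) (2 * m))`_m
          = poch z p r * poch (- z ^+ 3) p r / (poch (- z ^+ 2) p r * poch p p r).
  by rewrite -(middle_coef_even m2r) mulfK // mulf_neq0.
field.
by rewrite nz_z2 nz_Nz2 nz_pp nz_Np.
Qed.

Lemma sum_root_odd {n r} : m = (2 * r).+1 -> (m < n)%N ->
  \sum_(k < n) series_term z k = rhs_odd z r (2 * r) (2 * m * m).+1%:Z.
Proof.
move=> m2r lt_mn; rewrite (sum_eq_middle_coef lt_mn) /rhs_odd -exprnP (exprSr z (2 * m * m)).
have p2r1 : p ^+ (2 * r).+1 = z^-1 by rewrite (mulr1_eq z_mul_pm) m2r.
have nz := poch_pp_neq0 (leqnn m); rewrite {1}m2r pochS -exprS p2r1 in nz.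
move: nz; rewrite mulf_eq0 negb_or => /andP[nz_pp2r nz_1z].
have D := poch_double_sqrtS r sqrr_z2; rewrite p2r1 in D.
have E5 : poch z p r.+1 = (1 - z) * poch (z ^+ 5) p r by rewrite pochSl -exprS.
have E6 : poch (z ^+ 2) p r.+1 = (1 - z ^+ 2) * poch (z ^+ 6) p r by rewrite pochSl -exprD.
have : poch (z ^+ 2) p r.+1 * poch (- z ^+ 2) p r.+1 * (poch p p r * poch (- p) p r) != 0.
  by rewrite D mulf_neq0.
rewrite E6 !mulf_eq0 !negb_or => /andP[/andP[/andP[nz_1z2 nz_z6] nz_Nz2] /andP[nz_pp nz_Np]].
have -> : (poch_poly z (- z ^+ 2) (2 * m))`_m
          = poch z p r.+1 * poch (- z ^+ 3) p r / (poch (- z ^+ 2) p r.+1 * poch p p r).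
  by rewrite -(middle_coef_odd m2r) mulfK // mulf_neq0.
rewrite -[poch p p (2 * r)](mulfK nz_1z) -D E5 E6.
have nz_z1 : z - 1 != 0.
  by rewrite subr_eq0; apply: contraNneq nz_1z => ->; rewrite invr1 subrr.
by field; rewrite z_neq0 nz_z1 nz_Np nz_pp nz_Nz2 nz_z6 nz_1z2.
Qed.

End RootOfUnity.

Local Notation evalC z := (horner_morph (fun a : rat => mulrC z (ratr a))).

Definition frac_value (z : algC) (x : RF) (c : algC) : Prop :=
  exists A B : {poly rat},
    [/\ x = toRF A / toRF B, evalC z B != 0 & c = evalC z A / evalC z B].

Section FracValue.
Context {z : algC}.
Local Notation ev := (evalC z).
Local Notation frac_value := (frac_value z).

Lemma toRF_neq0 {B : {poly rat}} : ev B != 0 -> toRF B != 0.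
Proof. by rewrite /toRF tofrac_eq0; apply: contraNneq => ->; rewrite rmorph0. Qed.

Lemma frac_value_poly P : frac_value (toRF P) (ev P).
Proof. by exists P, 1; rewrite /toRF tofrac1 rmorph1 !divr1 oner_neq0. Qed.

Lemma frac_value1 : frac_value 1 1.
Proof. by have := frac_value_poly 1; rewrite /toRF tofrac1 rmorph1. Qed.

Lemma frac_value0 : frac_value 0 0.
Proof. by have := frac_value_poly 0; rewrite /toRF tofrac0 rmorph0. Qed.

Lemma frac_valueX : frac_value qq z.
Proof. by have := frac_value_poly 'X; rewrite horner_morphX. Qed.

Lemma frac_valueD {x c y d} :
  frac_value x c -> frac_value y d -> frac_value (x + y) (c + d).
Proof.
move=> [A [B [-> nzB ->]]] [C [D [-> nzD ->]]].
have tB := toRF_neq0 nzB; have tD := toRF_neq0 nzD; rewrite /toRF in tB tD.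
exists (A * D + C * B), (B * D); split.
- by rewrite /toRF tofracD !tofracM (addf_div _ _ tB tD).
- by rewrite rmorphM mulf_neq0.
by rewrite rmorphD !rmorphM (addf_div _ _ nzB nzD).
Qed.

Lemma frac_valueN {x c} : frac_value x c -> frac_value (- x) (- c).
Proof. by move=> [A [B [-> nzB ->]]]; exists (- A), B; rewrite rmorphN /toRF tofracN !mulNr. Qed.

Lemma frac_valueM {x c y d} :
  frac_value x c -> frac_value y d -> frac_value (x * y) (c * d).
Proof.
move=> [A [B [-> nzB ->]]] [C [D [-> nzD ->]]].
by exists (A * C), (B * D); rewrite !rmorphM mulf_neq0 // /toRF !tofracM !mulf_div.
Qed.

Lemma frac_valueV {x c} : c != 0 -> frac_value x c -> frac_value x^-1 c^-1.
Proof.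
move=> nz_c [A [B [-> nzB def_c]]].
have nzA : ev A != 0 by apply: contraNneq nz_c => evA0; rewrite def_c evA0 mul0r.
by exists B, A; rewrite def_c !invf_div.
Qed.

Lemma frac_valueXn {x c} k : frac_value x c -> frac_value (x ^+ k) (c ^+ k).
Proof.
move=> xc; elim: k => [|k IHk]; first exact: frac_value1.
by rewrite !exprS; apply: frac_valueM.
Qed.

Lemma frac_value_exprz {x c} (e : int) : c != 0 -> frac_value x c -> frac_value (x ^ e) (c ^ e).
Proof.
move=> nz_c xc; case: e => k; first exact: frac_valueXn.
by rewrite NegzE -!exprnN; apply: frac_valueV (frac_valueXn _ xc); rewrite expf_neq0.
Qed.

Lemma frac_value_poch {a b c d} k :
  frac_value a c -> frac_value b d -> frac_value (poch a b k) (poch c d k).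
Proof.
move=> ac bd; rewrite /poch; apply: (big_ind2 frac_value frac_value1 (@frac_valueM)) => j _.
exact: frac_valueD frac_value1 (frac_valueN (frac_valueM ac (frac_valueXn _ bd))).
Qed.

Context {n : nat}.
Hypothesis z_prim : n.-primitive_root z.

Lemma Phi_dvdE F : (Phi n %| F) = (ev F == 0).
Proof.
have [P [mCP _] dvdP] := minCpolyP z.
suff -> : Phi n = P by rewrite -dvdP.
apply: (@map_inj_poly _ _ (@ratr algC)); [exact: fmorph_inj | exact: rmorph0 |].
rewrite -mCP (minCpoly_cyclotomic z_prim) -(Cintr_Cyclotomic z_prim) /Phi -map_poly_comp.
by apply: eq_map_poly => a /=; rewrite rmorph_int.
Qed.

Lemma irreducible_Phi : irreducible_poly (Phi n).
Proof.
have size_Phi : size (Phi n) = (totient n).+1.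
  by rewrite size_map_inj_poly ?size_Cyclotomic //; exact: intr_inj.
split=> [|q size_q q_dvd]; first by rewrite size_Phi ltnS totient_gt0 (prim_order_gt0 z_prim).
have Phi_neq0 : Phi n != 0 by rewrite -size_poly_gt0 size_Phi.
have /dvdpP[h def_Phi] := q_dvd.
have := dvdpp (Phi n); rewrite {2}def_Phi Phi_dvdE rmorphM mulf_eq0 -!Phi_dvdE.
case/orP=> [Phi_h | Phi_q]; last by rewrite /eqp q_dvd Phi_q.
have h_neq0 : h != 0 by apply: contraNneq Phi_neq0; rewrite def_Phi => ->; rewrite mul0r.
have : h * q %| h * 1 by rewrite mulr1 -def_Phi.
by rewrite dvdp_mul2l // dvdp1 (negPf size_q).
Qed.

Lemma coprimep_Phi M : ev M != 0 -> coprimep M (Phi n).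
Proof.
rewrite -Phi_dvdE => Phi_ndvd_M.
by rewrite coprimep_sym irreducible_poly_coprime //; exact: irreducible_Phi.
Qed.

Lemma qcong_frac_value {x y c} : frac_value x c -> frac_value y c -> qcong x y (Phi n).
Proof.
move=> [A [B [-> nzB ->]]] [C [D [-> nzD /eqP]]].
rewrite eqr_div // => /eqP AD_CB; exists (A * D - C * B), (B * D); split.
- by apply: coprimep_Phi; rewrite rmorphM mulf_neq0.
- by rewrite Phi_dvdE rmorphB !rmorphM AD_CB subrr.
have tB := toRF_neq0 nzB; have tD := toRF_neq0 nzD; rewrite /toRF in tB tD *.
by rewrite tofracB !tofracM -mulNr (addf_div _ _ tB tD) mulNr.
Qed.

End FracValue.

Ltac frac_value_compose := repeat first
  [ apply: frac_valueX | apply: frac_value1 | apply: frac_valueXn | apply: frac_value_exprz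
  | apply: frac_value_poch | apply: frac_valueV | apply: frac_valueN | apply: frac_valueD
  | apply: frac_valueM ].

Section PrimitiveRoot.
Context {n : nat} {z : algC}.
Hypotheses (z_prim : n.-primitive_root z) (n_odd : odd n).

Lemma prim_root_neq0 : z != 0.
Proof.
apply/eqP => z0; have := prim_expr_order z_prim.
by rewrite z0 expr0n gtn_eqF ?(prim_order_gt0 z_prim) // => /eqP; rewrite eq_sym oner_eq0.
Qed.

Lemma prim_root_exp4_neq1 k : (0 < k < n)%N -> z ^+ (4 * k) != 1.
Proof.
move=> /andP[k_gt0 lt_kn]; rewrite -(prim_order_dvd z_prim) Gauss_dvdr.
  by apply/negP => /(dvdn_leq k_gt0); rewrite leqNgt lt_kn.
by rewrite coprime_sym (_ : 4 = 2 ^ 2)%N // coprime_pexpl // coprime2n.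
Qed.

Lemma poch_prim_root4_neq0 k : (k < n)%N -> poch (z ^+ 4) (z ^+ 4) k != 0.
Proof.
move=> lt_kn; apply: poch_neq0 => j /andP[j_gt0 le_jk].
by rewrite -exprM prim_root_exp4_neq1 // j_gt0 (leq_ltn_trans le_jk).
Qed.

Lemma frac_value_series_term k : (k < n)%N -> frac_value z (series_term qq k) (series_term z k).
Proof.
move=> lt_kn; rewrite /series_term; frac_value_compose.
by rewrite expf_neq0 // poch_prim_root4_neq0.
Qed.

Lemma frac_value_series :
  frac_value z (\sum_(i < n) series_term qq i) (\sum_(i < n) series_term z i).
Proof.
apply: (big_ind2 (frac_value z) frac_value0 (@frac_valueD z)) => i _.
exact: frac_value_series_term.
Qed.

Lemma frac_value_rhs_even a b e : (b < n)%N ->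
  frac_value z (rhs_even qq a b e) (rhs_even z a b e).
Proof.
move=> lt_bn; rewrite /rhs_even.
by frac_value_compose; [exact: poch_prim_root4_neq0 | exact: prim_root_neq0].
Qed.

Lemma frac_value_rhs_odd a b e : (b < n)%N ->
  frac_value z (rhs_odd qq a b e) (rhs_odd z a b e).
Proof.
move=> lt_bn; rewrite /rhs_odd.
by frac_value_compose; [exact: poch_prim_root4_neq0 | exact: prim_root_neq0].
Qed.

Lemma prim_root_exprz_opp {a b k} : (a + b = n * k)%N -> z ^ a%:Z = z ^ (- b%:Z).
Proof.
move=> def_k; rewrite -exprnP -exprnN.
apply: (mulIf (expf_neq0 b prim_root_neq0)); rewrite mulVf ?expf_neq0 ?prim_root_neq0 //.
by apply/eqP; rewrite -exprD def_k -(prim_order_dvd z_prim) dvdn_mulr.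
Qed.

Section Parity.
Context {m r B s k : nat}.
Hypotheses (lt_mn : (m < n)%N) (def_s : (4 * m).+1 = (n * s)%N).

Lemma prim_root_order_4m1 : z ^+ (4 * m).+1 = 1.
Proof. by apply/eqP; rewrite def_s -(prim_order_dvd z_prim) dvdn_mulr. Qed.

Lemma prim_root_exp4_neq1_le j : (0 < j <= m)%N -> z ^+ (4 * j) != 1.
Proof. by case/andP=> j_gt0 le_jm; rewrite prim_root_exp4_neq1 // j_gt0 (leq_ltn_trans le_jm). Qed.

Lemma sum_prim_root_even : m = (2 * r)%N -> (2 * m * m + B = n * k)%N ->
  \sum_(i < n) series_term z i = rhs_even z r (2 * r) (- B%:Z).
Proof.
move=> m2r def_k.
rewrite (sum_root_even prim_root_order_4m1 prim_root_exp4_neq1_le m2r lt_mn).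
by rewrite /rhs_even (prim_root_exprz_opp def_k).
Qed.

Lemma sum_prim_root_odd : m = (2 * r).+1 -> ((2 * m * m).+1 + B = n * k)%N ->
  \sum_(i < n) series_term z i = rhs_odd z r (2 * r) (- B%:Z).
Proof.
move=> m2r def_k.
rewrite (sum_root_odd prim_root_order_4m1 prim_root_exp4_neq1_le m2r lt_mn).
by rewrite /rhs_odd (prim_root_exprz_opp def_k).
Qed.

End Parity.

End PrimitiveRoot.

Lemma qcong_even {n a b e m r B s k} : odd n -> a = r -> b = (2 * r)%N -> e = - B%:Z ->
  m = (2 * r)%N -> (m < n)%N -> (4 * m).+1 = (n * s)%N -> (2 * m * m + B = n * k)%N ->
  qcong (\sum_(i < n) series_term qq i) (rhs_even qq a b e) (Phi n).
Proof.
move=> n_odd -> -> -> m2r lt_mn def_s def_k.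
have [z z_prim] := C_prim_root_exists (leq_ltn_trans (leq0n m) lt_mn).
apply: (qcong_frac_value z_prim (frac_value_series z_prim n_odd)).
rewrite (sum_prim_root_even z_prim n_odd lt_mn def_s m2r def_k).
by apply: (frac_value_rhs_even z_prim n_odd); rewrite -m2r.
Qed.

Lemma qcong_odd {n a b e m r B s k} : odd n -> a = r -> b = (2 * r)%N -> e = - B%:Z ->
  m = (2 * r).+1 -> (m < n)%N -> (4 * m).+1 = (n * s)%N -> ((2 * m * m).+1 + B = n * k)%N ->
  qcong (\sum_(i < n) series_term qq i) (rhs_odd qq a b e) (Phi n).
Proof.
move=> n_odd -> -> -> m2r lt_mn def_s def_k.
have [z z_prim] := C_prim_root_exists (leq_ltn_trans (leq0n m) lt_mn).
apply: (qcong_frac_value z_prim (frac_value_series z_prim n_odd)).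
rewrite (sum_prim_root_odd z_prim n_odd lt_mn def_s m2r def_k).
by apply: (frac_value_rhs_odd z_prim n_odd); rewrite (leq_ltn_trans _ lt_mn) // m2r.
Qed.

Theorem theorem4 (n : nat) (n_pos : (0 < n)%N) (n_odd : odd n) :
  let q := qq in
  let S := \sum_(k < n)
      (qpoch q (q ^+ 4) k) ^+ 2 / (qpoch (q ^+ 4) (q ^+ 4) k) ^+ 2 * (- q) ^+ k in
  let e1 := ((1 - (n ^ 2)%:Z) %/ 8)%Z in
  let e9 := ((9 - (n ^ 2)%:Z) %/ 8)%Z in
  [/\ (n %% 8 = 1)%N ->
        qcong S
          (qpoch q (q ^+ 4) ((n - 1) %/ 8) * qpoch (q ^+ 2) (q ^+ 4) ((n - 1) %/ 8)
           * qpoch (- q ^+ 3) (q ^+ 4) ((n - 1) %/ 8)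
           * qpoch (- q ^+ 4) (q ^+ 4) ((n - 1) %/ 8)
           / qpoch (q ^+ 4) (q ^+ 4) ((n - 1) %/ 4) * q ^ e1)
          (Phi n),
      (n %% 8 = 3)%N ->
        qcong S
          (qpoch q (q ^+ 4) ((3 * n - 1) %/ 8) * qpoch (q ^+ 2) (q ^+ 4) ((3 * n - 1) %/ 8)
           * qpoch (- q ^+ 3) (q ^+ 4) ((3 * n - 1) %/ 8)
           * qpoch (- q ^+ 4) (q ^+ 4) ((3 * n - 1) %/ 8)
           / qpoch (q ^+ 4) (q ^+ 4) ((3 * n - 1) %/ 4) * q ^ e1)
          (Phi n),
      (n %% 8 = 5)%N ->
        qcong S
          (- ((1 - q ^+ 2) * qpoch (- q ^+ 3) (q ^+ 4) ((n - 5) %/ 8)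
              * qpoch (- q ^+ 4) (q ^+ 4) ((n - 5) %/ 8)
              * qpoch (q ^+ 5) (q ^+ 4) ((n - 5) %/ 8)
              * qpoch (q ^+ 6) (q ^+ 4) ((n - 5) %/ 8)
              / qpoch (q ^+ 4) (q ^+ 4) ((n - 5) %/ 4)) * q ^ e9)
          (Phi n)
    & (n %% 8 = 7)%N ->
        qcong S
          (- ((1 - q ^+ 2) * qpoch (- q ^+ 3) (q ^+ 4) ((3 * n - 5) %/ 8)
              * qpoch (- q ^+ 4) (q ^+ 4) ((3 * n - 5) %/ 8)
              * qpoch (q ^+ 5) (q ^+ 4) ((3 * n - 5) %/ 8)
              * qpoch (q ^+ 6) (q ^+ 4) ((3 * n - 5) %/ 8)
              / qpoch (q ^+ 4) (q ^+ 4) ((3 * n - 5) %/ 4)) * q ^ e9)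
          (Phi n)].
Proof.
move=> q S e1 e9; have -> : S = \sum_(k < n) series_term qq k by [].
clear S; rewrite {}/q {}/e1 {}/e9.
split=> n_mod; have [t def_n] : exists t, (n = 8 * t + n %% 8)%N
  by exists (n %/ 8)%N; rewrite {1}(divn_eq n 8) mulnC.
all: rewrite n_mod in def_n; subst n.
- by apply: (qcong_even (m := 2 * t) (r := t) (B := 8 * t * t + 2 * t) (s := 1)
    (k := 2 * t)) => //; nia.
- by apply: (qcong_even (m := 6 * t + 2) (r := 3 * t + 1) (B := 8 * t * t + 6 * t + 1)
    (s := 3) (k := 10 * t + 3)) => //; nia.
- by apply: (qcong_odd (m := 2 * t + 1) (r := t) (B := 8 * t * t + 10 * t + 2) (s := 1)
    (k := 2 * t + 1)) => //; nia.
by apply: (qcong_odd (m := 6 * t + 5) (r := 3 * t + 2) (B := 8 * t * t + 14 * t + 5)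
  (s := 3) (k := 10 * t + 8)) => //; nia.
Qed.
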